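(* Let $\mathbb{K}$ be an algebraically closed field of characteristic zero and $N=2m\ge 2$ even. Then $\operatorname{Der}(\mathcal{H}_{N}')\cong \mathcal{H}_{N}'\rtimes \mathfrak{h}\cong \mathcal{H}_{N}$.
   Context: Let $A_N=\mathbb{K}[t_1^{\pm1},\dots,t_N^{\pm1}]$, $d_i=t_i\frac{\partial}{\partial t_i}$, and $t^{\bm r}=t_1^{r_1}\cdots t_N^{r_N}$ for $\bm r\in\mathbb{Z}^N$. Let $(\cdot,\cdot)$ be the standard bilinear form on $\mathbb{K}^N$, $(e_i,e_j)=\delta_{ij}$. For $u\in\mathbb{K}^N$, $\bm r\in\mathbb{Z}^N$ put $D(u,\bm r)=\sum_i u_i t^{\bm r}d_i$. Let $\bm J=\begin{pmatrix} O_m & I_m\\ -I_m & O_m\end{pmatrix}$, $\overline{\bm r}=\bm J\bm r$, $h_{\bm r}=D(\overline{\bm r},\bm r)$ (so $h_{\bm 0}=0$), $\mathfrak h=\operatorname{span}_{\mathbb{K}}\{d_1,\dots,d_N\}$. The Hamiltonian Lie algebra is $\mathcal{H}_N=\operatorname{span}_{\mathbb{K}}\{h_{\bm r}:\bm r\ne\bm 0\}\oplus\mathfrak h$ with commutator bracket, $[h_{\bm r},h_{\bm s}]=(\overline{\bm r},\bm s)h_{\bm r+\bm s}$, $[D(u,\bm 0),h_{\bm r}]=(u,\bm r)h_{\bm r}$; its derived subalgebra is $\mathcal{H}_N'=\operatorname{span}_{\mathbb{K}}\{h_{\bm r}:\bm r\ne\bm 0\}$, an ideal, and $\mathfrak h$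 acts on it by the adjoint action. $\operatorname{Der}$ denotes the Lie algebra of derivations. *)

(* with multinomials' monoid algebra {malg K[M]}
   (finitely supported functions M -> K) as the free K-vector space on M. *)
From HB Require Import structures.
From mathcomp Require Import all_boot all_order all_algebra.
From mathcomp Require Import finmap.
From mathcomp.multinomials Require Import monalg.

Set Implicit Arguments.
Unset Strict Implicit.
Unset Printing Implicit Defensive.

Import Order.TTheory GRing.Theory Num.Theory.
Local Open Scope ring_scope.

Definition lat (m : nat) := 'rV[int]_(m + m).

Definition nzlat (m : nat) := {r : lat m | r != 0}.

(* H_N' := span_K { h_r : r <> 0 }, realised as the free K-vector space
   (finitely supported functions) on the nonzero lattice vectors. *)
Definition Hder (K : fieldType) (m : nat) := {malg K[nzlat m]}.

(* The basis element h_t, with the convention h_0 = 0. *)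
Definition hb (K : fieldType) (m : nat) (t : lat m) : Hder K m :=
  match insub t with
  | Some t' => << (1 : K) *g t' >>
  | None => 0
  end.

(* (\bar r, s) = (J r, s) where J = [[0, I_m], [-I_m, 0]]:
   (J r)_i = r_{m+i} and (J r)_{m+i} = - r_i for i < m. *)
Definition Jform (m : nat) (r s : lat m) : int :=
  \sum_(i < m) (r 0 (rshift m i) * s 0 (lshift m i)
                - r 0 (lshift m i) * s 0 (rshift m i)).

Definition pairing (K : fieldType) (m : nat) (u : 'rV[K]_(m + m)) (r : lat m) : K :=
  \sum_(i < m + m) u 0 i * (r 0 i)%:~R.

Definition hbr (K : fieldType) (m : nat) (x y : Hder K m) : Hder K m :=
  \sum_(r <- msupp x) \sum_(s <- msupp y)
     ((x@_r * y@_s * (Jform (val r) (val s))%:~R) *: hb K (val r + val s)).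

(* Action of D(u, 0) in h on H_N': [D(u,0), h_r] = (u, r) h_r. *)
Definition hact (K : fieldType) (m : nat) (u : 'rV[K]_(m + m)) (x : Hder K m)
  : Hder K m :=
  \sum_(r <- msupp x) ((x@_r * pairing u (val r)) *: hb K (val r)).

(* H_N = span{h_r : r <> 0} (+) h, elements written (x, u) = x + D(u,0). *)
Definition Ham (K : fieldType) (m : nat) := (Hder K m * 'rV[K]_(m + m))%type.

Definition Ham_scale (K : fieldType) (m : nat) (a : K) (X : Ham K m) : Ham K m :=
  (a *: X.1, a *: X.2).

Definition Ham_add (K : fieldType) (m : nat) (X Y : Ham K m) : Ham K m :=
  (X.1 + Y.1, X.2 + Y.2).

(* Commutator bracket of H_N:
   [x + D(u,0), y + D(v,0)] = [x,y] + [D(u,0), y] - [D(v,0), x]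
   (the d_i commute, so the h-component is 0). *)
Definition Ham_br (K : fieldType) (m : nat) (X Y : Ham K m) : Ham K m :=
  (hbr X.1 Y.1 + hact X.2 Y.1 - hact Y.2 X.1, 0).

Definition is_derivation (K : fieldType) (m : nat) (D : Hder K m -> Hder K m) : Prop :=
  (forall (a : K) (x y : Hder K m), D (a *: x + y) = a *: D x + D y) /\
  (forall x y : Hder K m, D (hbr x y) = hbr (D x) y + hbr x (D y)).

(* Lie algebra isomorphism H_N ~= Der(H_N'), Der(H_N') carrying its
   pointwise vector space structure and the commutator bracket. *)
Definition Ham_iso_Der (K : fieldType) (m : nat)
  (Phi : Ham K m -> (Hder K m -> Hder K m)) : Prop :=
  [/\ forall X, is_derivation (Phi X),
      forall (a : K) (X Y : Ham K m) (z : Hder K m),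
        Phi (Ham_add (Ham_scale a X) Y) z = a *: Phi X z + Phi Y z,
      forall (X Y : Ham K m) (z : Hder K m),
        Phi (Ham_br X Y) z = Phi X (Phi Y z) - Phi Y (Phi X z),
      forall X Y : Ham K m, (forall z, Phi X z = Phi Y z) -> X = Y
    & forall D, is_derivation D -> exists X, forall z, Phi X z = D z].

(* Write D h_s = sum_t f(s, t) h_t for a derivation D of H_N'.  The Leibniz
   rule on [h_r, h_s] says that along each diagonal t = s + a the function
   g(s) = f(s, s + a) solves a functional equation (funeq a g).  For a <> 0 its
   solutions vanishing at -a are the maps s |-> c_a (J a, s); for a = 0 its
   solutions vanishing at 0 are the linear forms s |-> (u, s).
   Both come down to finding lattice vectors non-orthogonal to finitely many
   given nonzero ones.  Hence D = ad (sum_a c_a h_a) + D(u, 0), the sum being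
   finite because the c_a can be read off the finitely many D h_(e_j).
   That (x, u) |-> ad x + D(u, 0) is a Lie morphism into Der(H_N') is formal:
   it holds for any Lie algebra extended by commuting derivations; it is
   injective by looking at coefficients. *)

From HB Require Import structures.
From mathcomp Require Import all_boot all_order all_algebra finmap sesquilinear.
From mathcomp.multinomials Require Import monalg.
From mathcomp Require Import ring.

Set Implicit Arguments.
Unset Strict Implicit.
Unset Printing Implicit Defensive.

Import GRing.Theory Num.Theory.
Local Open Scope ring_scope.

Lemma intr_eq0_pchar0 (R : idomainType) : [pchar R] =i pred0 ->
  forall z : int, (z%:~R == 0 :> R) = (z == 0).
Proof.
move=> /pcharf0P natr_eq0 [] n; first exact: natr_eq0.
by rewrite NegzE intrN oppr_eq0 -pmulrn natr_eq0.
Qed.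

Lemma poly_nat_nonroot (R : numDomainType) (p : {poly R}) :
  p != 0 -> exists n : nat, ~~ root p n%:R.
Proof.
move=> p_neq0; pose rs := [seq n%:R | n <- iota 0 (size p)] : seq R.
have [/hasP[_ /mapP[n _ ->]]|/hasPn all_roots] := boolP (has (fun x => ~~ root p x) rs).
  by exists n.
suff: (size rs < size p)%N by rewrite size_map size_iota ltnn.
apply: max_poly_roots p_neq0 _ _; first by apply/allP => x /all_roots/negbNE.
by rewrite map_inj_uniq ?iota_uniq // => i j /eqP; rewrite eqr_nat => /eqP.
Qed.

Section LinearMaps.
Variables (R : nzRingType) (U V W : lmodType R).

Lemma linear_fun0 (f : U -> V) : linear f -> f 0 = 0.
Proof. by move=> fL; have := fL (-1) 0 0; rewrite scaler0 addr0 scaleN1r addNr. Qed.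

Lemma linear_funZ (f : U -> V) : linear f -> forall a x, f (a *: x) = a *: f x.
Proof. by move=> fL a x; rewrite -[a *: x]addr0 fL linear_fun0 // addr0. Qed.

Lemma linear_comp (f : V -> W) (g : U -> V) : linear f -> linear g -> linear (f \o g).
Proof. by move=> fL gL a x y /=; rewrite gL fL. Qed.

Lemma linear_add (f g : U -> V) : linear f -> linear g -> linear (f \+ g).
Proof. by move=> fL gL a x y /=; rewrite fL gL scalerDr addrACA. Qed.

End LinearMaps.

Section SemidirectAdjoint.
Variables (R : nzRingType) (V U : lmodType R).
Variables (br : {bilinear V -> V -> V}) (act : {bilinear U -> V -> V}).
Hypothesis br_jacobi : forall x y z, br x (br y z) = br (br x y) z + br y (br x z).
Hypothesis act_br : forall u y z, act u (br y z) = br (act u y) z + br y (act u z).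
Hypothesis actC : forall u v z, act u (act v z) = act v (act u z).

Definition sd_ad (X : V * U) z := br X.1 z + act X.2 z.
Definition sd_br (X Y : V * U) : V * U := (br X.1 Y.1 + act X.2 Y.1 - act Y.2 X.1, 0).

Lemma sd_ad_linear X : linear (sd_ad X).
Proof. by move=> a y z; rewrite /sd_ad !linearPr /= scalerDr addrACA. Qed.

Lemma sd_ad_br_Leibniz X y z : sd_ad X (br y z) = br (sd_ad X y) z + br y (sd_ad X z).
Proof. by rewrite /sd_ad br_jacobi act_br linearDl linearDr addrACA. Qed.

Lemma sd_adP a X Y z :
  sd_ad (a *: X.1 + Y.1, a *: X.2 + Y.2) z = a *: sd_ad X z + sd_ad Y z.
Proof. by rewrite /sd_ad !linearPl /= scalerDr addrACA. Qed.

(* The commutator splits into [ad x, ad y] = ad [x, y] (Jacobi), the mixed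
   terms [act u, ad y] = ad (act u y) and [ad x, act v] = - ad (act v x)
   (act is by derivations), and [act u, act v] = 0. *)
Lemma sd_ad_br X Y z : sd_ad (sd_br X Y) z = sd_ad X (sd_ad Y z) - sd_ad Y (sd_ad X z).
Proof.
case: X Y => [x u] [y v]; rewrite /sd_ad /sd_br /= linear0l addr0 linearBl linearDl.
rewrite !linearDr [X in _ = _ - X]addrACA opprD [RHS]addrACA !opprD.
rewrite [X in _ = X + _]addrACA [X in _ = _ + X]addrACA.
rewrite br_jacobi (addrK (br y (br x z))) (act_br u y) (addrK (br y (act u z))).
rewrite (act_br v x) (actC u v) subrr addr0 (addrC (br (act v x) z)) opprD addNKr.
exact: addrAC.
Qed.

End SemidirectAdjoint.

Section Symplectic.
Variable m : nat.
Implicit Types r s t v x y : lat m.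

Lemma JformPl (a : int) x y s : Jform (a *: x + y) s = a * Jform x s + Jform y s.
Proof.
by rewrite /Jform big_distrr -big_split /=; apply: eq_bigr => i _; rewrite !mxE; ring.
Qed.

Lemma JformPr (a : int) r x y : Jform r (a *: x + y) = a * Jform r x + Jform r y.
Proof.
by rewrite /Jform big_distrr -big_split /=; apply: eq_bigr => i _; rewrite !mxE; ring.
Qed.

Lemma Jform_is_bilinear : bilinear_for
  (GRing.Scale.Law.clone _ _ *%R _) (GRing.Scale.Law.clone _ _ *%R _) (@Jform m).
Proof. by split=> [s|r] a x y; [exact: JformPl | exact: JformPr]. Qed.

HB.instance Definition _ :=
  bilinear_isBilinear.Build int (lat m) (lat m) int _ _ (@Jform m) Jform_is_bilinear.

Lemma JformC r s : Jform s r = - Jform r s.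
Proof. by rewrite /Jform -sumrN; apply: eq_bigr => i _; ring. Qed.

Lemma Jformxx r : Jform r r = 0.
Proof. by rewrite /Jform big1 // => i _; ring. Qed.

Lemma Jform_delta_neq0 r : r != 0 -> exists j, Jform r 'e_j != 0.
Proof.
move=> r_neq0; have [j rj_neq0] : exists j, r 0 j != 0.
  apply/existsP; apply: contraNT r_neq0 => /existsPn r0.
  by apply/eqP/rowP => j; rewrite mxE; apply/eqP/negbNE.
have Jform_delta i : Jform r 'e_i = \sum_(k < m) (r 0 (rshift m k) * (lshift m k == i)%:R
                                        - r 0 (lshift m k) * (rshift m k == i)%:R).
  by apply: eq_bigr => k _; rewrite !mxE.
case: (split_ordP j) => k jk; rewrite {}jk in rj_neq0.
  exists (rshift m k); rewrite Jform_delta (bigD1 k) //= big1 => [|l lk].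
    by rewrite eq_lrshift eqxx addr0 mulr0 mulr1 sub0r oppr_eq0.
  by rewrite eq_lrshift eq_rshift (negbTE lk) !mulr0 subr0.
exists (lshift m k); rewrite Jform_delta (bigD1 k) //= big1 => [|l lk].
  by rewrite eq_rlshift eqxx addr0 mulr0 mulr1 subr0.
by rewrite eq_rlshift eq_lshift (negbTE lk) !mulr0 subr0.
Qed.

(* The vector (n^j)_j, for n off the roots of the product of the polynomials
   sum_j Jform v e_j X^j, is non-orthogonal to every v. *)
Lemma exists_nonorthogonal (vs : seq (lat m)) :
  all (fun v => v != 0) vs -> exists t, all (fun v => Jform v t != 0) vs.
Proof.
move=> vs_neq0.
pose P v : {poly int} := \poly_(j < m + m) Jform v (\row_i ((i : nat) == j)%:R).
have delta_row (j : 'I_(m + m)) : \row_i ((i : nat) == j)%:R = 'e_j :> lat m.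
  by apply/rowP => i; rewrite !mxE.
have hornerP v (n : int) : (P v).[n] = Jform v (\row_j n ^+ j).
  rewrite horner_poly [\row_j _]row_sum_delta linear_sumr /=.
  by apply: eq_bigr => j _; rewrite delta_row linearZr /= mxE mulrC.
have P_neq0 v : v != 0 -> P v != 0.
  move=> /Jform_delta_neq0[j vj_neq0]; apply: contraNneq vj_neq0 => Pv0.
  by have := congr1 (coefp j) Pv0; rewrite /= coef_poly ltn_ord delta_row coef0 => ->.
have [|n] := @poly_nat_nonroot _ (\prod_(v <- vs) P v).
  by rewrite prodf_seq_neq0; apply: (sub_all _ vs_neq0) => v /P_neq0.
rewrite /root horner_prod prodf_seq_neq0 => nonroot; exists (\row_j n%:R ^+ j).
by apply: (sub_all _ nonroot) => v; rewrite hornerP.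
Qed.

Definition nonorth_delta r : lat m :=
  if [pick j | Jform r 'e_j != 0] is Some j then 'e_j else 0.

Lemma nonorth_deltaP r : r != 0 -> exists2 j, nonorth_delta r = 'e_j & Jform r 'e_j != 0.
Proof.
move=> /Jform_delta_neq0[j rj_neq0]; rewrite /nonorth_delta.
case: pickP => [i ri_neq0|no_j]; first by exists i.
by have := no_j j; rewrite rj_neq0.
Qed.

End Symplectic.

Section FunctionalEquation.
Variables (K : fieldType) (m : nat).
Hypothesis charK0 : [pchar K] =i pred0.
Local Notation w r s := ((Jform r s)%:~R : K).
Implicit Types (a b r s t v y : lat m) (g h : lat m -> K).

Let w_eq0 r s : (w r s == 0) = (Jform r s == 0).
Proof. exact: intr_eq0_pchar0. Qed.

Let wDl r1 r2 s : w (r1 + r2) s = w r1 s + w r2 s.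
Proof. by rewrite linearDl intrD. Qed.

Let wDr r s1 s2 : w r (s1 + s2) = w r s1 + w r s2.
Proof. by rewrite linearDr intrD. Qed.

(* With g s the coefficient of h_(s+a) in D h_s, this is the coefficient of
   h_(r+s+a) in D [h_r, h_s] = [D h_r, h_s] + [h_r, D h_s]. *)
Definition funeq a g :=
  forall r s, w r s * g (r + s) = g r * w (r + a) s + w r (s + a) * g s.

Lemma funeq_Jform a : funeq a (fun s => w a s).
Proof.
move=> r s; rewrite -!intrM -!intrD; congr intr.
by rewrite !(linearDl, linearDr) /= (JformC a r); ring.
Qed.

Lemma funeq_lincomb a g1 g2 (c1 c2 : K) : funeq a g1 -> funeq a g2 ->
  funeq a (fun s => c1 * g1 s + c2 * g2 s).
Proof.
move=> g1_sol g2_sol r s; rewrite mulrDr mulrCA [w r s * (c2 * _)]mulrCA.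
by rewrite g1_sol g2_sol; ring.
Qed.

Section Vanishing.
Variables (a : lat m) (h : lat m -> K).
Hypotheses (h_sol : funeq a h) (h_Na : h (- a) = 0).

Lemma funeq_orth r s : h s = 0 -> Jform a s != 0 -> Jform r s = 0 -> h r = 0.
Proof.
move=> hs0 as_neq0 rs0; have /esym/eqP := h_sol r s.
rewrite hs0 mulr0 addr0 rs0 mul0r wDl rs0 add0r mulf_eq0 w_eq0 (negbTE as_neq0).
by rewrite orbF => /eqP.
Qed.

Lemma funeq_shift s : Jform a s != 0 -> h (s - a) = h s.
Proof.
move=> as_neq0; have := h_sol (- a) s.
rewrite h_Na mul0r add0r wDr addrC !linearNl /= Jformxx oppr0 addr0 intrN !mulNr.
by move/oppr_inj/mulfI; apply; rewrite w_eq0.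
Qed.

Lemma funeq_shiftZ s (z : int) : Jform a s != 0 -> h (s + z *: a) = h s.
Proof.
move=> as_neq0; have a_shift (x : int) : Jform a (s + x *: a) = Jform a s.
  by rewrite linearDr linearZr /= Jformxx mulr0 addr0.
elim/int_rect: z => [|n IHn|n IHn]; first by rewrite scale0r addr0.
  rewrite -(funeq_shift _) ?a_shift // -IHn intS scalerDl scale1r (addrC a).
  by rewrite addrA addrK.
rewrite intS opprD scalerDl scaleN1r (addrC (- a)) addrA funeq_shift ?a_shift //.
Qed.

Lemma funeq_vanish_nonorth b y :
  h b = 0 -> Jform a b != 0 -> Jform a y != 0 -> h y = 0.
Proof.
move=> hb0 ab_neq0 ay_neq0; pose s := Jform a b *: y - Jform y b *: a.
have hs0 : h s = 0.
  apply: funeq_orth hb0 ab_neq0 _.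
  by rewrite linearBl !linearZl /= mulrC subrr.
have ys_eq : Jform a b *: y = s + Jform y b *: a by rewrite subrK.
have hby0 : h (Jform a b *: y) = 0.
  rewrite ys_eq funeq_shiftZ // /s linearBr !linearZr /= Jformxx mulr0 subr0.
  exact: mulf_neq0.
apply: funeq_orth hby0 _ _; rewrite linearZr /= ?Jformxx ?mulr0 //.
exact: mulf_neq0.
Qed.

(* A vector t orthogonal to a is reached through some r non-orthogonal to both
   a and t + a, via the equation at (r, t). *)
Lemma funeq_vanish b : a != 0 -> h b = 0 -> Jform a b != 0 -> forall t, h t = 0.
Proof.
move=> a_neq0 hb0 ab_neq0 t.
have [at0|] := eqVneq (Jform a t) 0; last exact: funeq_vanish_nonorth hb0 ab_neq0.
have [->//|t_neq_Na] := eqVneq t (- a).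
have [r /and3P[ar_neq0 tar_neq0 _]] : exists r, all (fun v => Jform v r != 0) [:: a; t + a].
  by apply: exists_nonorthogonal; rewrite /= a_neq0 addr_eq0 t_neq_Na.
have hr0 := funeq_vanish_nonorth hb0 ab_neq0 ar_neq0.
have hrt0 : h (r + t) = 0.
  by apply: funeq_vanish_nonorth hb0 ab_neq0 _; rewrite linearDr /= at0 addr0.
have /esym/eqP := h_sol r t; rewrite hrt0 hr0 mulr0 mul0r add0r mulf_eq0 w_eq0.
by rewrite (JformC (t + a) r) oppr_eq0 (negbTE tar_neq0) => /eqP.
Qed.

End Vanishing.

Lemma funeq_proportional a g b : a != 0 -> Jform a b != 0 -> g (- a) = 0 ->
  funeq a g -> forall s, g s * w a b = g b * w a s.
Proof.
move=> a_neq0 ab_neq0 g_Na g_sol s; apply/eqP; rewrite -subr_eq0; apply/eqP.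
pose h t := w a b * g t + (- g b) * w a t.
have h_sol : funeq a h := funeq_lincomb _ _ g_sol (funeq_Jform a).
have h_Na : h (- a) = 0 by rewrite /h g_Na linearNr /= Jformxx oppr0 !mulr0 addr0.
have hb0 : h b = 0 by rewrite /h mulrC mulNr addrN.
by have := funeq_vanish h_sol h_Na a_neq0 hb0 ab_neq0 s; rewrite /h mulNr mulrC.
Qed.

Lemma additive_lat_pairing (g : {additive lat m -> K}) s :
  g s = pairing (\row_j g 'e_j) s.
Proof.
rewrite {1}[s]row_sum_delta raddf_sum; apply: eq_bigr => j _.
by rewrite -[s 0 j in LHS]intz scaler_int raddfMz mxE mulrzr.
Qed.

Lemma funeq0_additive g : g 0 = 0 -> funeq 0 g -> {morph g : r s / r + s}.
Proof.
move=> g0 g_sol.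
have gD_nonorth r s : Jform r s != 0 -> g (r + s) = g r + g s.
  move=> rs_neq0; apply: (mulfI (_ : w r s != 0)); first by rewrite w_eq0.
  by rewrite g_sol !addr0; ring.
have gN r : g (- r) = - g r.
  have [->|r_neq0] := eqVneq r 0; first by rewrite oppr0 g0 oppr0.
  have [v /andP[rv_neq0 _]] : exists v, all (fun x => Jform x v != 0) [:: r].
    by apply: exists_nonorthogonal; rewrite /= r_neq0.
  have gv : g v = g r + (g (- r) + g v).
    rewrite -[v in LHS](subrK r) addrC gD_nonorth; last first.
      by rewrite linearBr /= Jformxx subr0.
    by rewrite [v - r]addrC gD_nonorth // linearNl /= oppr_eq0.
  apply/eqP; rewrite -addr_eq0 addrC; apply/eqP/(addIr (g v)).
  by rewrite add0r -addrA -gv.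
move=> r s; have [rs0|/gD_nonorth//] := eqVneq (Jform r s) 0.
have [->|r_neq0] := eqVneq r 0; first by rewrite g0 !add0r.
have [->|s_neq0] := eqVneq s 0; first by rewrite g0 !addr0.
have [/eqP|rs_neq0] := eqVneq (r + s) 0.
  by rewrite addr_eq0 => /eqP->; rewrite gN !addNr g0.
have [v /and3P[rv_neq0 sv_neq0 /andP[rsv_neq0 _]]] :
    exists v, all (fun x => Jform x v != 0) [:: r; s; r + s].
  by apply: exists_nonorthogonal; rewrite /= r_neq0 s_neq0 rs_neq0.
apply: (addIr (g v)); rewrite -addrA -!gD_nonorth ?addrA //.
by rewrite linearDr /= rs0 add0r.
Qed.

Lemma funeq0_pairing g : g 0 = 0 -> funeq 0 g ->
  forall s, g s = pairing (\row_j g 'e_j) s.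
Proof.
move=> g0 g_sol; have gD := funeq0_additive g0 g_sol.
have gB : zmod_morphism g by move=> r s; apply: (addIr (g s)); rewrite -gD !subrK.
exact: (additive_lat_pairing (HB.pack g (GRing.isZmodMorphism.Build _ _ g gB))).
Qed.
End FunctionalEquation.

Section CoefficientFunction.
Variables (K : fieldType) (m : nat).
Hypothesis charK0 : [pchar K] =i pred0.
Local Notation w r s := ((Jform r s)%:~R : K).
Implicit Types (a r s t : lat m).

(* f s t plays the role of the coefficient of h_t in D h_s, for a derivation D. *)
Variable f : lat m -> lat m -> K.
Hypotheses (f0l : forall t, f 0 t = 0) (f0r : forall s, f s 0 = 0).
Hypothesis f_Leibniz : forall r s t,
  w r s * f (r + s) t = f r (t - s) * w (t - s) s + w r (t - r) * f s (t - r).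

Lemma coef_funeq a : funeq a (fun s => f s (s + a)).
Proof.
move=> r s; have := f_Leibniz r s (r + s + a).
have -> : r + s + a - s = r + a by rewrite addrAC addrK.
by have -> : r + s + a - r = s + a by rewrite addrAC [r + s]addrC addrK.
Qed.

Definition inner_coef a : K :=
  f (nonorth_delta a) (nonorth_delta a + a) / w a (nonorth_delta a).

Lemma coef_offdiag a s : a != 0 -> f s (s + a) = inner_coef a * w a s.
Proof.
move=> a_neq0; have [j bj ab_neq0] := nonorth_deltaP a_neq0.
have := funeq_proportional charK0 (g := fun s => f s (s + a)) a_neq0 ab_neq0.
rewrite /= addNr f0r => /(_ erefl (coef_funeq a) s) prop_s.
by rewrite /inner_coef bj mulrAC -prop_s mulfK // intr_eq0_pchar0.
Qed.

Lemma coef_diag s : f s s = pairing (\row_j f 'e_j 'e_j) s.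
Proof.
apply: (funeq0_pairing charK0 (g := fun s => f s s)) => [|r t /=]; first exact: f0l.
by rewrite !addr0; have := coef_funeq 0 r t; rewrite !addr0.
Qed.

End CoefficientFunction.

Section HamiltonianAlgebra.
Variables (K : fieldType) (m : nat).
Local Notation H := (Hder K m).
Local Notation hb := (@hb K m).
Local Notation w r s := ((Jform r s)%:~R : K).
Implicit Types (r s t : lat m) (x y z : H) (u v : 'rV[K]_(m + m)).

Lemma nzlat_ind (P : lat m -> Prop) :
  P 0 -> (forall k : nzlat m, P (val k)) -> forall r, P r.
Proof.
by move=> P0 Pk r; have [->|r_neq0] := eqVneq r 0; last exact: (Pk (Sub r r_neq0)).
Qed.

Lemma hbE (k : nzlat m) : hb (val k) = << 1 *g k >>.
Proof. by rewrite /hb valK. Qed.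

Lemma hb0 : hb 0 = 0.
Proof. by rewrite /hb insubN // negbK. Qed.

Lemma hbZ (c : K) (k : nzlat m) : c *: hb (val k) = << c *g k >>.
Proof.
have U (a : K) l : (<< a *g k >> : H)@_l = a *+ (k == l) by exact: mcoeffU.
by apply/malgP => l; rewrite hbE mcoeffZ [in RHS]U [X in c * X]U mulr_natr.
Qed.

Lemma hb_decomp x : x = \sum_(k <- msupp x) x@_k *: hb (val k).
Proof. by rewrite {1}[x]monalgE; apply: eq_bigr => k _; rewrite hbZ. Qed.

Lemma linear_hb_decomp (V : lmodType K) (f : H -> V) : linear f ->
  forall x, f x = \sum_(k <- msupp x) x@_k *: f (hb (val k)).
Proof.
move=> fL x; have [_ fD] := GRing.semilinear_linear fL.
rewrite {1}[x]hb_decomp (big_morph f fD (linear_fun0 fL)).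
by apply: eq_bigr => k _; apply: linear_funZ.
Qed.

Lemma linear_hb_eq (V : lmodType K) (f g : H -> V) : linear f -> linear g ->
  (forall k : nzlat m, f (hb (val k)) = g (hb (val k))) -> f =1 g.
Proof.
move=> fL gL fg x; rewrite (linear_hb_decomp fL) (linear_hb_decomp gL).
by apply: eq_bigr => k _; rewrite fg.
Qed.

Definition linext (V : lmodType K) (G : nzlat m -> V) x : V :=
  \sum_(k <- msupp x) x@_k *: G k.

Section LinearExtension.
Variables (V : lmodType K) (G : nzlat m -> V).

Lemma linextEw (d : {fset nzlat m}) x :
  (msupp x `<=` d)%fset -> linext G x = \sum_(k <- d) x@_k *: G k.
Proof.
move=> le_xd; rewrite /linext (big_fset_incl _ le_xd) // => k _ /mcoeff_outdom->.
exact: scale0r.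
Qed.

Lemma linext_is_linear : linear (linext G).
Proof.
move=> a x y; pose d := (msupp x `|` msupp y)%fset.
have le_xd : (msupp x `<=` d)%fset by rewrite fsubsetUl.
have le_yd : (msupp y `<=` d)%fset by rewrite fsubsetUr.
have le_d : (msupp (a *: x + y) `<=` d)%fset.
  exact: fsubset_trans (msuppD_le _ _) (fsetSU _ (msuppZ_le _ _)).
rewrite (linextEw le_d) (linextEw le_xd) (linextEw le_yd) scaler_sumr -big_split.
by apply: eq_bigr => k _; rewrite mcoeffD mcoeffZ scalerDl scalerA.
Qed.

Lemma linext_hb (k : nzlat m) : linext G (hb (val k)) = G k.
Proof. by rewrite hbE /linext msuppU oner_eq0 big_seq_fset1 mcoeffUU scale1r. Qed.

End LinearExtension.

Lemma eq_linext (V : lmodType K) (G1 G2 : nzlat m -> V) :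
  G1 =1 G2 -> linext G1 =1 linext G2.
Proof. by move=> eqG x; apply: eq_bigr => k _; rewrite eqG. Qed.

Lemma linext_funP (V : lmodType K) (a : K) (G1 G2 : nzlat m -> V) x :
  linext (fun k => a *: G1 k + G2 k) x = a *: linext G1 x + linext G2 x.
Proof.
rewrite /linext scaler_sumr -big_split; apply: eq_bigr => k _.
by rewrite scalerDr !scalerA mulrC.
Qed.

Lemma pairingD u r s : pairing u (r + s) = pairing u r + pairing u s.
Proof.
by rewrite /pairing -big_split; apply: eq_bigr => i _; rewrite mxE intrD mulrDr.
Qed.

Lemma pairingPl (a : K) u v r : pairing (a *: u + v) r = a * pairing u r + pairing v r.
Proof.
rewrite /pairing mulr_sumr -big_split; apply: eq_bigr => i _.
by rewrite !mxE mulrDl mulrA.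
Qed.

Lemma pairing_delta u j : pairing u 'e_j = u 0 j.
Proof.
rewrite /pairing (bigD1 j) //= big1 => [|i ij]; first by rewrite !mxE !eqxx /= mulr1 addr0.
by rewrite !mxE (negbTE ij) andbF mulr0.
Qed.

Lemma hbrE x y : hbr x y =
  linext (fun k => linext (fun l => w (val k) (val l) *: hb (val k + val l)) y) x.
Proof.
apply: eq_bigr => k _; rewrite scaler_sumr; apply: eq_bigr => l _.
by rewrite !scalerA.
Qed.

Lemma hbr_is_bilinear : bilinear_for
  (GRing.Scale.Law.clone _ _ *:%R _) (GRing.Scale.Law.clone _ _ *:%R _) (@hbr K m).
Proof.
split=> [y|x] a x1 x2 /=.
  rewrite (hbrE (a *: x1 + x2)) (hbrE x1) (hbrE x2).
  exact: (linext_is_linear _ a x1 x2).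
pose Lk (k : nzlat m) := linext (fun l => w (val k) (val l) *: hb (val k + val l)).
rewrite (hbrE x (a *: x1 + x2)) (hbrE x x1) (hbrE x x2).
transitivity (linext (fun k => a *: Lk k x1 + Lk k x2) x).
  exact: (eq_linext (fun k => linext_is_linear _ a x1 x2) x).
exact: linext_funP.
Qed.

HB.instance Definition _ :=
  bilinear_isBilinear.Build K H H H _ _ (@hbr K m) hbr_is_bilinear.

Lemma hactE u x : hact u x = linext (fun k => pairing u (val k) *: hb (val k)) x.
Proof. by apply: eq_bigr => k _; rewrite scalerA. Qed.

Lemma hact_is_bilinear : bilinear_for
  (GRing.Scale.Law.clone _ _ *:%R _) (GRing.Scale.Law.clone _ _ *:%R _) (@hact K m).
Proof.
split=> [z|u] a x y /=.
  rewrite (hactE (a *: x + y)) (hactE x) (hactE y) -linext_funP.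
  by apply: eq_linext => k; rewrite pairingPl scalerDl scalerA.
rewrite (hactE u (a *: x + y)) (hactE u x) (hactE u y).
exact: linext_is_linear.
Qed.

HB.instance Definition _ :=
  bilinear_isBilinear.Build K 'rV[K]_(m + m) H H _ _ (@hact K m) hact_is_bilinear.

Lemma hbr_linear x : linear (hbr x).
Proof. exact: linearPr. Qed.

Lemma hbrl_linear y : linear (fun x => hbr x y).
Proof. exact: linearPl. Qed.

Lemma hact_linear u : linear (hact u).
Proof. exact: linearPr. Qed.

Lemma hbr_hb r s : hbr (hb r) (hb s) = w r s *: hb (r + s).
Proof.
elim/nzlat_ind: r => [|k]; first by rewrite hb0 linear0l linear0l /= scale0r.
elim/nzlat_ind: s => [|l]; first by rewrite hb0 linear0r linear0r /= scale0r.
by rewrite hbrE linext_hb linext_hb.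
Qed.

Lemma hact_hb u r : hact u (hb r) = pairing u r *: hb r.
Proof.
elim/nzlat_ind: r => [|k]; first by rewrite hb0 linear0r scaler0.
by rewrite hactE linext_hb.
Qed.

Lemma hbr_jacobi_hb r s t :
  hbr (hb r) (hbr (hb s) (hb t)) =
    hbr (hbr (hb r) (hb s)) (hb t) + hbr (hb s) (hbr (hb r) (hb t)).
Proof.
rewrite (hbr_hb s t) (hbr_hb r s) (hbr_hb r t) linearZr linearZl linearZr /=.
rewrite (hbr_hb r) (hbr_hb (r + s)) (hbr_hb s) scalerA scalerA scalerA.
rewrite (addrCA s r t) addrA -scalerDl.
suff -> : w s t * w r (s + t) = w r s * w (r + s) t + w r t * w s (r + t) by [].
rewrite -!intrM -intrD; congr intr.
by rewrite !(linearDl, linearDr) /= (JformC r s); ring.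
Qed.

Lemma hbr_jacobi x y z : hbr x (hbr y z) = hbr (hbr x y) z + hbr y (hbr x z).
Proof.
move: z; apply: linear_hb_eq => [||l].
- exact: linear_comp (hbr_linear _) (hbr_linear _).
- exact: linear_add (hbr_linear _) (linear_comp (hbr_linear _) (hbr_linear _)).
move: y; apply: linear_hb_eq => [||k].
- exact: linear_comp (hbr_linear _) (hbrl_linear _).
- exact: linear_add (linear_comp (hbrl_linear _) (hbr_linear _)) (hbrl_linear _).
move: x; apply: linear_hb_eq => [||j].
- exact: hbrl_linear.
- exact: linear_add (linear_comp (hbrl_linear _) (hbrl_linear _))
                    (linear_comp (hbr_linear _) (hbrl_linear _)).
exact: hbr_jacobi_hb.
Qed.

Lemma hact_hbr u y z : hact u (hbr y z) = hbr (hact u y) z + hbr y (hact u z).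
Proof.
move: z; apply: linear_hb_eq => [||l].
- exact: linear_comp (hact_linear _) (hbr_linear _).
- exact: linear_add (hbr_linear _) (linear_comp (hbr_linear _) (hact_linear _)).
move: y; apply: linear_hb_eq => [||k].
- exact: linear_comp (hact_linear _) (hbrl_linear _).
- exact: linear_add (linear_comp (hbrl_linear _) (hact_linear _)) (hbrl_linear _).
move: (val k) (val l) => r s /=.
rewrite (hbr_hb r s) linearZr /= (hact_hb u (r + s)) (hact_hb u r) (hact_hb u s).
rewrite linearZl linearZr /= (hbr_hb r s) scalerA scalerA scalerA -scalerDl pairingD.
by rewrite mulrDr mulrC [w r s * _]mulrC.
Qed.

Lemma hactC u v z : hact u (hact v z) = hact v (hact u z).
Proof.
move: z; apply: linear_hb_eq => [||k];
  try exact: linear_comp (hact_linear _) (hact_linear _).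
rewrite /= (hact_hb v) (hact_hb u) linearZr linearZr /= (hact_hb u) (hact_hb v).
by rewrite scalerA scalerA mulrC.
Qed.

(* The coefficient of h_t, taken to be 0 at t = 0 (where h_0 = 0). *)
Definition hcoef t x : K := if insub t is Some k then x@_k else 0.

Lemma hcoefE (k : nzlat m) x : hcoef (val k) x = x@_k.
Proof. by rewrite /hcoef valK. Qed.

Lemma hcoef0 x : hcoef 0 x = 0.
Proof. by rewrite /hcoef insubN // negbK. Qed.

Lemma hcoef_is_linear t : linear_for *%R (hcoef t).
Proof.
move=> a x y; rewrite /hcoef; case: insub => [k|]; last by rewrite mulr0 addr0.
by rewrite mcoeffD mcoeffZ.
Qed.

HB.instance Definition _ t :=
  GRing.isLinear.Build K H K *%R (hcoef t) (hcoef_is_linear t).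

Lemma hcoefP x y : (forall t, hcoef t x = hcoef t y) -> x = y.
Proof. by move=> eq_xy; apply/malgP => k; rewrite -!hcoefE. Qed.

Lemma hcoef_hb r t : hcoef t (hb r) = ((r == t) && (t != 0))%:R.
Proof.
elim/nzlat_ind: r => [|k]; first by rewrite hb0 linear0 eq_sym andbN.
elim/nzlat_ind: t => [|l]; first by rewrite hcoef0 eqxx andbF.
rewrite hcoefE hbE (valP l) andbT val_eqE.
exact: mcoeffU.
Qed.

Lemma hcoef_hbr_hb x s t : hcoef t (hbr x (hb s)) = hcoef (t - s) x * w (t - s) s.
Proof.
move: x; apply: (@linear_hb_eq K^o) => [||k].
- by move=> a x y; rewrite /= linearPl linearP.
- by move=> a x y; rewrite /= linearP mulrDl -mulrA.
move: (val k) (valP k) => r r_neq0 /=.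
rewrite hbr_hb linearZ /= !hcoef_hb.
have [<-|neq] := eqVneq (r + s) t; last first.
  rewrite /= mulr0; suff /negbTE-> : r != t - s by rewrite mul0r.
  by apply: contraNneq neq => ->; rewrite subrK.
rewrite addrK !eqxx r_neq0 /= mul1r.
have [/eqP|] := eqVneq (r + s) 0; last by rewrite mulr1.
by rewrite addr_eq0 => /eqP->; rewrite linearNl /= Jformxx oppr0 mul0r.
Qed.

Lemma hcoef_hb_hbr y r t : hcoef t (hbr (hb r) y) = w r (t - r) * hcoef (t - r) y.
Proof.
move: y; apply: (@linear_hb_eq K^o) => [||l].
- by move=> a x y; rewrite /= linearPr linearP.
- by move=> a x y; rewrite /= linearP mulrDr mulrCA.
move: (val l) (valP l) => s s_neq0 /=.
rewrite hbr_hb linearZ /= !hcoef_hb.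
have [<-|neq] := eqVneq (r + s) t; last first.
  rewrite /= mulr0; suff /negbTE-> : s != t - r by rewrite mulr0.
  by apply: contraNneq neq => ->; rewrite addrC subrK.
rewrite [r + s]addrC addrK !eqxx s_neq0 /= mulr1.
have [/eqP|] := eqVneq (s + r) 0; last by rewrite mulr1.
by rewrite addr_eq0 => /eqP->; rewrite linearNr /= Jformxx oppr0 mul0r.
Qed.

Lemma hcoef_sum_hb (S : seq (lat m)) (c : lat m -> K) t : uniq S -> t != 0 ->
  hcoef t (\sum_(a <- S) c a *: hb a) = if t \in S then c t else 0.
Proof.
move=> S_uniq t_neq0; rewrite linear_sum /=.
have hcoefZ a : hcoef t (c a *: hb a) = c a * (a == t)%:R.
  by rewrite linearZ /= hcoef_hb t_neq0 andbT.
rewrite (eq_bigr _ (fun a _ => hcoefZ a)); case: ifPn => [tS|tNS].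
  rewrite (bigD1_seq t) //= eqxx mulr1 big1 ?addr0 // => a /negbTE->.
  exact: mulr0.
rewrite big1_seq // => a /andP[_ aS]; suff /negbTE-> : a != t by rewrite mulr0.
by apply: contraNneq tNS => <-.
Qed.

End HamiltonianAlgebra.

Section Derivations.
Variables (K : fieldType) (m : nat).
Hypothesis charK0 : [pchar K] =i pred0.
Local Notation H := (Hder K m).
Local Notation hb := (@hb K m).
Local Notation w r s := ((Jform r s)%:~R : K).
Implicit Types (a r s t : lat m) (x y z : H) (u v : 'rV[K]_(m + m)).

Definition Ham_ad : Ham K m -> H -> H := sd_ad (@hbr K m) (@hact K m).

Lemma Ham_adE x u z : Ham_ad (x, u) z = hbr x z + hact u z.
Proof. by []. Qed.

Lemma Ham_ad_is_derivation X : is_derivation (Ham_ad X).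
Proof.
exact: (conj (sd_ad_linear _ _ X) (sd_ad_br_Leibniz (@hbr_jacobi K m) (@hact_hbr K m) X)).
Qed.

Lemma Ham_adP (c : K) X Y z :
  Ham_ad (Ham_add (Ham_scale c X) Y) z = c *: Ham_ad X z + Ham_ad Y z.
Proof. exact: sd_adP. Qed.

Lemma Ham_ad_br X Y z :
  Ham_ad (Ham_br X Y) z = Ham_ad X (Ham_ad Y z) - Ham_ad Y (Ham_ad X z).
Proof. exact: (sd_ad_br (@hbr_jacobi K m) (@hact_hbr K m) (@hactC K m)). Qed.

Lemma hcoef_Ham_ad_hb x u s t : hcoef t (Ham_ad (x, u) (hb s)) =
  hcoef (t - s) x * w (t - s) s + pairing u s * hcoef t (hb s).
Proof. by rewrite Ham_adE linearD /= hcoef_hbr_hb hact_hb linearZ. Qed.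

Lemma Ham_ad_inj X Y : Ham_ad X =1 Ham_ad Y -> X = Y.
Proof.
case: X Y => [x u] [y v] eq_ad.
have eq_coef s t : hcoef (t - s) x * w (t - s) s + pairing u s * hcoef t (hb s) =
                   hcoef (t - s) y * w (t - s) s + pairing v s * hcoef t (hb s).
  by rewrite -hcoef_Ham_ad_hb -hcoef_Ham_ad_hb eq_ad.
have delta_neq0 j : 'e_j != 0 :> lat m.
  by apply/eqP => /rowP /(_ j); rewrite !mxE !eqxx.
have <- : u = v.
  apply/rowP => j; have := eq_coef 'e_j 'e_j.
  rewrite subrr !hcoef0 !mul0r !add0r hcoef_hb eqxx delta_neq0 /= !mulr1.
  by rewrite !pairing_delta.
congr (_, _); apply: hcoefP => a; have [->|a_neq0] := eqVneq a 0.
  by rewrite !hcoef0.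
have [j aj_neq0] := Jform_delta_neq0 a_neq0.
have := eq_coef 'e_j (a + 'e_j); rewrite addrK hcoef_hb [('e_j == _)]eq_sym.
rewrite -subr_eq0 addrK (negbTE a_neq0) /= !mulr0 !addr0.
by apply: mulIf; rewrite intr_eq0_pchar0.
Qed.

Section Preimage.
Variable D : H -> H.
Hypothesis D_der : is_derivation D.

Definition Dcoef s t := hcoef t (D (hb s)).

Lemma Dcoef0l t : Dcoef 0 t = 0.
Proof. by rewrite /Dcoef hb0 (linear_fun0 D_der.1) linear0. Qed.

Lemma Dcoef0r s : Dcoef s 0 = 0.
Proof. exact: hcoef0. Qed.

Lemma Dcoef_Leibniz r s t :
  w r s * Dcoef (r + s) t = Dcoef r (t - s) * w (t - s) s + w r (t - r) * Dcoef s (t - r).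
Proof.
rewrite /Dcoef -(hcoef_hbr_hb (D (hb r)) s t) -(hcoef_hb_hbr (D (hb s)) r t).
by rewrite -linearD /= -D_der.2 hbr_hb (linear_funZ D_der.1) linearZ.
Qed.

Let Dcoef_offdiag := coef_offdiag charK0 Dcoef0r Dcoef_Leibniz.
Let Dcoef_diag := coef_diag charK0 Dcoef0l Dcoef_Leibniz.

Definition offdiag_supp : seq (lat m) :=
  undup [seq val k - 'e_j | j <- enum 'I_(m + m), k <- msupp (D (hb 'e_j))].

Definition der_inner : H := \sum_(a <- offdiag_supp) inner_coef Dcoef a *: hb a.

Definition der_outer : 'rV[K]_(m + m) := \row_j Dcoef 'e_j 'e_j.

Lemma inner_coef_supp a : a != 0 -> inner_coef Dcoef a != 0 -> a \in offdiag_supp.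
Proof.
move=> a_neq0; rewrite /inner_coef; have [j -> _] := nonorth_deltaP a_neq0.
rewrite mulf_eq0 negb_or => /andP[Dja_neq0 _].
have ja_neq0 : 'e_j + a != 0 by apply: contraNneq Dja_neq0 => ->; rewrite Dcoef0r.
rewrite mem_undup; apply/allpairsPdep; exists j, (Sub ('e_j + a) ja_neq0).
split; first exact: mem_enum.
  by rewrite -mcoeff_neq0 -hcoefE.
by rewrite /= addrC addKr.
Qed.

Lemma hcoef_der_inner a : a != 0 -> hcoef a der_inner = inner_coef Dcoef a.
Proof.
move=> a_neq0; rewrite hcoef_sum_hb ?undup_uniq //; case: ifPn => // aNS.
by apply/esym/eqP; apply: contraNT aNS; apply: inner_coef_supp.
Qed.

Lemma Ham_ad_der : Ham_ad (der_inner, der_outer) =1 D.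
Proof.
apply: (linear_hb_eq (sd_ad_linear _ _ _) D_der.1) => k; apply: hcoefP => t.
move: (val k) (valP k) => s s_neq0 /=; rewrite hcoef_Ham_ad_hb.
have [->|t_neq0] := eqVneq t 0.
  by rewrite sub0r linearNl /= Jformxx oppr0 mulr0 hcoef0 mulr0 addr0 hcoef0.
have [<-|s_neq_t] := eqVneq s t.
  by rewrite subrr hcoef0 mul0r add0r hcoef_hb eqxx s_neq0 /= mulr1 -Dcoef_diag.
have ts_neq0 : t - s != 0 by rewrite subr_eq0 eq_sym.
rewrite hcoef_der_inner // hcoef_hb (negbTE s_neq_t) /= mulr0 addr0.
by rewrite -Dcoef_offdiag // [s + _]addrC subrK.
Qed.

End Preimage.

Lemma Ham_ad_surj D : is_derivation D -> exists X, Ham_ad X =1 D.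
Proof. by move=> D_der; exists (der_inner D, der_outer D); apply: Ham_ad_der. Qed.

End Derivations.

Theorem theorem4p5 (K : closedFieldType) (m : nat)
  (charK0 : [pchar K]%R =i pred0) (m_gt0 : (0 < m)%N) :
  exists Phi : Ham K m -> (Hder K m -> Hder K m), Ham_iso_Der Phi.
Proof.
exists (@Ham_ad K m); split.
- exact: Ham_ad_is_derivation.
- exact: Ham_adP.
- exact: Ham_ad_br.
- exact: (Ham_ad_inj charK0).
- exact: (Ham_ad_surj charK0).
Qed.
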